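(* Let $x$ be a stable g-matching with $x\ne x^{\max}$. For each rotation $R\in\mathcal R(x)$, the g-matching $x':=x+\chi^R$ is stable and satisfies $x\prec_F x'$.
   Context: Let $G=(V,E)$ be a finite bipartite graph with color classes $W$ and $F$; the edge joining $w\in W$ and $f\in F$ is written $wf$. Let $b\in\mathbb Z_+^E$ be capacities. For $v\in V$, $E_v$ is the set of edges at $v$, $\mathcal B_v=\{z\in\mathbb Z_+^{E_v}: z\le b|_{E_v}\}$, $\mathbf 1^e$ the unit vector of $e$, $|z|=\sum_e|z(e)|$, $\wedge,\vee$ componentwise min/max. Each $v$ has a choice function $C_v:\mathcal B_v\to\mathcal B_v$ with $C_v(z)\le z$ and, for all $z,z'$: (A1) $z\ge z'\ge C_v(z)\Rightarrow C_v(z')=C_v(z)$; (A2) $z\ge z'\Rightarrow C_v(z)\wedge z'\le C_v(z')$; (A3) $z\ge z'\Rightarrow|C_v(z)|\ge|C_v(z')|$. $z$ is acceptable if $C_v(z)=z$; for distinct acceptable $z,z'$, $z'\prec_v z$ iff $C_v(z\vee z')=z$. $x_v$ = restriction of $x$ to $E_v$. A g-matching is $x\in\mathbb Z_+^E$, $x\le b$, each $x_v$ acceptable; $x\prec_F y$ (distinct) iff $x_f\preceq_f y_f$ for all $f\in F$. $e\in E_v$ is interesting for $v$ under acceptable $z$ if some $z'\in\mathcal B_v$ has $z'(e)>z(e)$, $z'(e')=z(e')$ for $e'\neq e$, $C_v(z')(e)>z(e)$; $e=wf$ blocks a g-matching $x$ if it is interesting for $w$ under $x_w$ and for $f$ under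 $x_f$; stable g-matchings (no blocking edges) form a nonempty finite distributive lattice under $\prec_F$ with maximum $x^{\max}$. Rotations: for stable $x$, $U_F^+(x)$ = edges $wf$ interesting for $f$ under $x_f$; $U_F^-(x)$ = edges $wf$ with $x(wf)>0$ not interesting for $f$. Legal $f$-pair: $(a,c)$, $a\in U_F^+(x)\cap E_f$, $c\in E_f\setminus\{a\}$, $C_f(x_f+\mathbf 1^a)=x_f+\mathbf 1^a-\mathbf 1^c$. Legal $w$-pair: $(c,a)$, $c\in U_F^-(x)\cap E_w$, $a\in U_F^+(x)\cap E_w$, $x_w+\mathbf 1^a-\mathbf 1^c$ acceptable; essential if no $d\in (U_F^+(x)\cap E_w)\setminus\{a\}$ is interesting for $w$ under $x_w+\mathbf 1^a-\mathbf 1^c$ (at most one essential pair per $c$). Digraph $\mathcal D$: vertices $w^e,f^e$ for $e=wf\in U_F^+(x)\cup U_F^-(x)$, arcs $(w^a,f^a)$ for $a\in U_F^+(x)$, $(f^c,w^c)$ for $c\in U_F^-(x)$, $(f^a,f^c)$ for legal $f$-pairs $(a,c)$, $(w^c,w^a)$ for essential $w$-pairs $(c,a)$. Repeatedly delete vertices with no entering arc; the remainder is a disjoint union of directed cycles, each giving a cyclic sequence $(a_1,c_1,\dots,a_k,c_k)$ of distinct edges of $G$; this is a rotation $R$ applicable to $x$, with $\chi^R\in\{0,\pm1\}^E$ equal to $1$ on $\{a_i\}$, $-1$ on $\{c_i\}$, $0$ elsewhere; $\mathcal R(x)$ is the set of these rotations. *)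

From HB Require Import structures.
From mathcomp Require Import all_boot all_order all_algebra.
From mathcomp Require Import boolp.
Set Implicit Arguments. Unset Strict Implicit. Unset Printing Implicit Defensive.

(* Vectors in Z_+^{E_v}
   are represented as vectors in Z_+^E vanishing outside E_v. *)
Record gmarket (W F E : finType) := GMarket {
  wend : E -> W;
  fend : E -> F;
  cap : E -> nat;
  choice : (W + F)%type -> {ffun E -> nat} -> {ffun E -> nat} }.

Section Defs.
Context {W F E : finType} (G : gmarket W F E).
Local Notation V := (W + F)%type.
Local Notation vec := {ffun E -> nat}.
Local Notation C := (choice G).

Definition incident (v : V) (e : E) : bool :=
  match v with inl w => wend G e == w | inr f => fend G e == f end.

Definition simple_graph : Prop := injective (fun e => (wend G e, fend G e)).

Definition inB (v : V) (z : vec) : Prop :=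
  forall e, z e <= (if incident v e then cap G e else 0).

Definition lev (z z' : vec) : Prop := forall e, z e <= z' e.
Definition vmin (z z' : vec) : vec := [ffun e => minn (z e) (z' e)].
Definition vmax (z z' : vec) : vec := [ffun e => maxn (z e) (z' e)].
Definition vsize (z : vec) : nat := \sum_e z e.
Definition unitv (a : E) : vec := [ffun e => nat_of_bool (e == a)].
Definition vadd (z z' : vec) : vec := [ffun e => z e + z' e].

Definition restrict (v : V) (x : vec) : vec :=
  [ffun e => if incident v e then x e else 0].

(* C_v : B_v -> B_v, C_v(z) <= z, and axioms (A1)-(A3) *)
Definition choice_axioms : Prop := forall v : V,
  (forall z, inB v z -> inB v (C v z) /\ lev (C v z) z) /\
  (forall z z', inB v z -> inB v z' ->
     lev z' z -> lev (C v z) z' -> C v z' = C v z) /\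
  (forall z z', inB v z -> inB v z' ->
     lev z' z -> lev (vmin (C v z) z') (C v z')) /\
  (forall z z', inB v z -> inB v z' ->
     lev z' z -> vsize (C v z') <= vsize (C v z)).

Definition acceptable (v : V) (z : vec) : Prop := inB v z /\ C v z = z.

Definition prefv (v : V) (z' z : vec) : Prop :=
  acceptable v z /\ acceptable v z' /\ z <> z' /\ C v (vmax z z') = z.
Definition preceqv (v : V) (z' z : vec) : Prop := z' = z \/ prefv v z' z.

Definition gmatching (x : vec) : Prop :=
  (forall e, x e <= cap G e) /\ (forall v, acceptable v (restrict v x)).

Definition precF (x y : vec) : Prop :=
  x <> y /\ forall f : F, preceqv (inr f) (restrict (inr f) x) (restrict (inr f) y).

Definition interesting (v : V) (e : E) (z : vec) : Prop :=
  incident v e /\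
  exists z' : vec, inB v z' /\ z e < z' e /\
    (forall e', e' != e -> z' e' = z e') /\ z e < C v z' e.

Definition blocks (x : vec) (e : E) : Prop :=
  interesting (inl (wend G e)) e (restrict (inl (wend G e)) x) /\
  interesting (inr (fend G e)) e (restrict (inr (fend G e)) x).

Definition stable (x : vec) : Prop := gmatching x /\ forall e, ~ blocks x e.

Definition is_max_stable (xm : vec) : Prop :=
  stable xm /\ forall y, stable y -> y = xm \/ precF y xm.

Section Rotations.
Variable x : vec.

Definition Uplus (e : E) : Prop :=
  interesting (inr (fend G e)) e (restrict (inr (fend G e)) x).
Definition Uminus (e : E) : Prop := 0 < x e /\ ~ Uplus e.

Definition legal_f (f : F) (a c : E) : Prop :=
  incident (inr f) a /\ Uplus a /\ incident (inr f) c /\ c != a /\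
  forall e, C (inr f) (vadd (restrict (inr f) x) (unitv a)) e + (e == c)
            = restrict (inr f) x e + (e == a).

(* x_w + 1^a - 1^c (exact, since x(c) > 0 and a <> c for the pairs considered) *)
Definition wshift (w : W) (a c : E) : vec :=
  [ffun e => restrict (inl w) x e + (e == a) - (e == c)].

Definition legal_w (w : W) (c a : E) : Prop :=
  incident (inl w) c /\ Uminus c /\ incident (inl w) a /\ Uplus a /\
  acceptable (inl w) (wshift w a c).

Definition essential (w : W) (c a : E) : Prop :=
  legal_w w c a /\
  forall d, incident (inl w) d -> Uplus d -> d != a ->
    ~ interesting (inl w) d (wshift w a c).

(* vertices of D: (true, e) = w^e, (false, e) = f^e, for e in U+ \cup U- *)
Definition inD (p : bool * E) : Prop := Uplus p.2 \/ Uminus p.2.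

Definition arc (p q : bool * E) : Prop :=
  inD p /\ inD q /\
  match p.1, q.1 with
  | true, false => p.2 = q.2 /\ Uplus p.2
  | false, true => p.2 = q.2 /\ Uminus p.2
  | false, false => legal_f (fend G p.2) p.2 q.2
  | true, true => essential (wend G p.2) p.2 q.2
  end.

Fixpoint remk (k : nat) (p : bool * E) : Prop :=
  match k with
  | 0 => inD p
  | k'.+1 => remk k' p /\ exists u, remk k' u /\ arc u p
  end.

Definition remainder (p : bool * E) : Prop := remk #|{: bool * E}| p.

Definition rotation (cyc : seq (bool * E)) : Prop :=
  cyc <> [::] /\ uniq cyc /\
  (forall pq, pq \in zip cyc (rot 1 cyc) -> arc pq.1 pq.2) /\
  (forall p, p \in cyc -> remainder p).

Definition on_cycle (cyc : seq (bool * E)) (e : E) : Prop :=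
  (true, e) \in cyc \/ (false, e) \in cyc.

Definition chi (cyc : seq (bool * E)) (e : E) : int :=
  if `[< on_cycle cyc e /\ Uplus e >] then 1%R
  else if `[< on_cycle cyc e /\ Uminus e >] then (-1)%R
  else 0%R.

End Rotations.
End Defs.

From Pilot Require Import Defs.
From HB Require Import structures.
From mathcomp Require Import all_boot all_order all_algebra.
From mathcomp Require Import boolp zify.
Set Implicit Arguments. Unset Strict Implicit. Unset Printing Implicit Defensive.

(* Let A and R be the edges raised (the a_i) and lowered (the c_i) by the rotation, and
   x' = x + 1_A - 1_R.  Along the cycle, the arcs (f^a, f^c) pair the raised edges of a
   firm f injectively with its lowered ones, each c being rejected by f when a is
   offered, and the arcs (w^c, w^a) pair the lowered edges of a worker w injectively with
   its raised ones through essential exchanges.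
   At a firm, offering all of A_f at once then makes f reject exactly R_f:
   C_f (x_f + 1_A) = x'_f.  This makes x'_f acceptable, gives x_f \prec_f x'_f because
   x_f \vee x'_f = x_f + 1_A, and shows that an edge outside A which is interesting for
   f under x'_f was already interesting under x_f, i.e. lies in U^+.
   At a worker, every essential exchange x_w + 1^a - 1^c is acceptable and leaves all of
   U^+ uninteresting; combining them with (A2) shows that x'_w is acceptable, and a
   counting argument with (A3) shows that U^+ stays uninteresting for w under x'_w.
   Hence an edge blocking x' would lie in U^+ and be interesting for its worker, which is
   impossible. *)

Section Vectors.
Variable E : finType.
Local Notation vec := {ffun E -> nat}.
Implicit Types (z p m : vec) (S : {set E}).

Definition shift z p m : vec := [ffun e => z e + p e - m e].
Definition indv S : vec := [ffun e => nat_of_bool (e \in S)].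

Lemma vsize_vadd z p : vsize (vadd z p) = vsize z + vsize p.
Proof. by rewrite /vsize -big_split; apply: eq_bigr => e _; rewrite ffunE. Qed.

Lemma vsize_shift z p m :
  lev m (vadd z p) -> vsize (shift z p m) + vsize m = vsize z + vsize p.
Proof.
move=> le_m; rewrite /vsize -!big_split /=; apply: eq_bigr => e _.
by have := le_m e; rewrite !ffunE; lia.
Qed.

Lemma vsize_unitv (a : E) : vsize (unitv a) = 1.
Proof.
by rewrite /vsize (bigD1 a) //= ffunE eqxx big1 // => e /negbTE; rewrite ffunE => ->.
Qed.

Lemma vsize_indv S : vsize (indv S) = #|S|.
Proof.
rewrite /vsize -sum1_card [RHS]big_mkcond.
by apply: eq_bigr => e _; rewrite ffunE; case: ifP.
Qed.

Lemma lev_vsize_eq z z' : lev z z' -> vsize z' <= vsize z -> z = z'.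
Proof.
move=> le_zz' le_size; apply/ffunP => e; apply/eqP; rewrite eqn_leq le_zz' leqNgt.
apply/negP => lt_e; move: le_size; rewrite /vsize (bigD1 e) // [X in _ <= X](bigD1 e) //=.
have : \sum_(g | g != e) z g <= \sum_(g | g != e) z' g by apply: leq_sum => g _; apply: le_zz'.
lia.
Qed.

Lemma disjoint_imply (A B : {pred E}) e : [disjoint A & B] -> (e \in A) ==> (e \notin B).
Proof. by move=> AB; apply/implyP => /(disjointFr AB) ->. Qed.

End Vectors.

Section ChoiceFunction.
Variables (E : finType) (u : E -> nat) (C : {ffun E -> nat} -> {ffun E -> nat}).
Local Notation vec := {ffun E -> nat}.
Implicit Types (x z X Z p : vec) (P : {set E}).

Definition bounded z := forall e, z e <= u e.

(* [C z <= z] and the axioms (A1)-(A3), on the vectors below [u]. *)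
Definition choice_on : Prop :=
  [/\ forall z, bounded z -> lev (C z) z,
      forall z z', bounded z -> lev z' z -> lev (C z) z' -> C z' = C z,
      forall z z', bounded z -> lev z' z -> lev (vmin (C z) z') (C z') &
      forall z z', bounded z -> lev z' z -> vsize (C z') <= vsize (C z)].

Definition interestingb z e := (z e < u e) && (z e < C (vadd z (unitv e)) e).

Definition uninteresting_on P z := forall d, d \in P -> ~~ interestingb z d.

Lemma bounded_lev z z' : bounded z -> lev z' z -> bounded z'.
Proof. by move=> bz le_z' e; apply: leq_trans (bz e). Qed.

Hypothesis choiceC : choice_on.

Lemma choice_lev z : bounded z -> lev (C z) z.
Proof. by case: choiceC => A0 _ _ _; apply: A0. Qed.

Lemma choice_sub z z' : bounded z -> lev z' z -> lev (C z) z' -> C z' = C z.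
Proof. by case: choiceC => _ A1 _ _; apply: A1. Qed.

Lemma choice_min z z' e : bounded z -> lev z' z -> minn (C z e) (z' e) <= C z' e.
Proof. by case: choiceC => _ _ A2 _ bz le_z'; have := A2 _ _ bz le_z' e; rewrite ffunE. Qed.

Lemma vsize_choice z z' : bounded z -> lev z' z -> vsize (C z') <= vsize (C z).
Proof. by case: choiceC => _ _ _ A3; apply: A3. Qed.

Lemma choice_id_of_ge z : bounded z -> (forall e, z e <= C z e) -> C z = z.
Proof.
by move=> bz geC; apply/ffunP => e; apply/eqP; rewrite eqn_leq choice_lev ?geC.
Qed.

Lemma choice_id_of_lev Z X : bounded Z -> lev X Z -> C Z = X -> C X = X.
Proof. by move=> bZ le_XZ CZ; rewrite (choice_sub bZ le_XZ) ?CZ // CZ. Qed.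

Lemma interestingbP z e : bounded z ->
  reflect (exists z' : vec, [/\ bounded z', z e < z' e,
             forall e', e' != e -> z' e' = z e' & z e < C z' e])
          (interestingb z e).
Proof.
move=> bz; apply: (iffP andP) => [[lt_u lt_C] | [z' [bz' lt_z' eq_z' lt_C]]].
  exists (vadd z (unitv e)); split=> [g||e' /negbTE|]; rewrite ?ffunE ?eqxx //.
  - by case: eqP => [->|_]; [lia | rewrite addn0].
  - by rewrite addn1.
  - by move=> ->; rewrite addn0.
have le_z' : lev (vadd z (unitv e)) z'.
  by move=> g; rewrite !ffunE; case: eqP => [->|/eqP /eq_z' ->]; rewrite ?addn1 ?addn0.
split; first exact: leq_trans lt_z' (bz' e).
by have := choice_min e bz' le_z'; rewrite !ffunE eqxx; lia.
Qed.

Lemma choice_of_uninteresting P z Z :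
  bounded Z -> C z = z -> lev z Z -> (forall e, z e < Z e -> e \in P) ->
  uninteresting_on P z -> C Z = z.
Proof.
move=> bZ Cz le_zZ zP Pz.
suff le_CZ : lev (C Z) z by rewrite -(choice_sub bZ le_zZ le_CZ) Cz.
move=> e; have [lt_e|ge_e] := ltnP (z e) (Z e); last exact: leq_trans (choice_lev bZ e) ge_e.
have le_ze : lev (vadd z (unitv e)) Z.
  by move=> g; have := le_zZ g; rewrite !ffunE; case: eqP => [->|]; lia.
have := choice_min e bZ le_ze; have := Pz e (zP e lt_e); have := bZ e.
by rewrite /interestingb !ffunE eqxx; lia.
Qed.

Lemma uninteresting_exchange x a c :
  let y := shift x (unitv a) (unitv c) in
  bounded x -> C x = x -> a != c -> 0 < x c -> C y = y ->
  uninteresting_on [set a] x -> uninteresting_on [set a] y.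
Proof.
(* Otherwise y + 1^a would be acceptable, larger than x, and below x + 2 1^a, whose
   choice is x: this contradicts (A3). *)
move=> y bx Cx ac pos_c Cy xa _ /set1P ->; apply/andP => -[lt_u lt_C].
have ac_F : (a == c) = false by apply/negbTE.
set Z := vadd (vadd x (unitv a)) (unitv a).
have bZ : bounded Z.
  move=> g; move: lt_u; rewrite !ffunE eqxx ac_F.
  by case: eqP => [->|_]; [lia | have := bx g; lia].
have CZ : C Z = x.
  apply: (choice_of_uninteresting bZ Cx _ _ xa) => [g|g]; rewrite !ffunE; first lia.
  by case: eqP => [->|_]; rewrite ?set11 //; lia.
have le_yZ : lev (vadd y (unitv a)) Z.
  by move=> g; rewrite !ffunE; case: eqP => [->|_]; rewrite ?ac_F; lia.
have Cya : C (vadd y (unitv a)) = vadd y (unitv a).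
  apply: choice_id_of_ge (bounded_lev bZ le_yZ) _ => g.
  have [->|/negbTE ga] := eqVneq g a; first by move: lt_C; rewrite !ffunE eqxx; lia.
  by have := choice_min g bZ le_yZ; rewrite CZ !ffunE ga; lia.
have := vsize_choice bZ le_yZ; rewrite Cya CZ vsize_vadd vsize_unitv.
have le_c : lev (unitv c) (vadd x (unitv a)) by move=> g; rewrite !ffunE; case: eqP => [->|]; lia.
by have := vsize_shift le_c; rewrite !vsize_unitv -/y; lia.
Qed.

Lemma rejected_uninteresting x a c :
  bounded (vadd x (unitv a)) -> a != c ->
  (forall e, C (vadd x (unitv a)) e + (e == c) = x e + (e == a)) ->
  ~~ interestingb x c.
Proof.
(* By (A1) x + 1^a has the same choice as x + 1^a + 1^c; if c were interesting, x + 1^c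
   would be acceptable below x + 1^a + 1^c and too large for (A3). *)
move=> bxa ac rej; apply/andP => -[lt_u lt_C].
have ca : (c == a) = false by rewrite eq_sym; apply/negbTE.
have pos_c : 0 < x c by have := rej c; rewrite eqxx ca; lia.
set Z := vadd (vadd x (unitv a)) (unitv c).
have bZ : bounded Z.
  by move=> g; have := bxa g; rewrite !ffunE; case: (g =P c) => [->|_]; rewrite ?ca; lia.
have le_aZ : lev (vadd x (unitv a)) Z by move=> g; rewrite !ffunE; lia.
have le_cZ : lev (vadd x (unitv c)) Z by move=> g; rewrite !ffunE; lia.
have CZ : C (vadd x (unitv a)) = C Z.
  apply: choice_sub => // g; have := choice_lev bZ g; have := choice_min c bZ le_aZ.
  have := rej c; rewrite !ffunE eqxx ca; case: (g =P c) => [->|_]; rewrite ?ca; lia.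
have Cxc : C (vadd x (unitv c)) = vadd x (unitv c).
  apply: choice_id_of_ge (bounded_lev bZ le_cZ) _ => g.
  have [->|/negbTE gc] := eqVneq g c; first by move: lt_C; rewrite !ffunE eqxx; lia.
  by have := choice_min g bZ le_cZ; have := rej g; rewrite -CZ !ffunE gc; lia.
have := vsize_choice bZ le_cZ; rewrite Cxc -CZ vsize_vadd vsize_unitv.
have : vsize (C (vadd x (unitv a))) + 1 = vsize x + 1.
  rewrite /vsize -[in LHS](vsize_unitv c) -[in RHS](vsize_unitv a) /vsize -!big_split.
  by apply: eq_bigr => g _; rewrite /= !ffunE rej.
lia.
Qed.

Section Raising.
Variables (x : vec) (SA SC : {set E}).
Hypotheses (bx : bounded (vadd x (indv SA))) (Cx : C x = x).
Hypotheses (SC_SA : [disjoint SC & SA]) (SC_pos : forall c, c \in SC -> 0 < x c).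
Hypothesis card_SA_SC : #|SA| <= #|SC|.
Hypothesis rejected :
  forall c, c \in SC -> exists2 a, a \in SA & C (vadd x (unitv a)) c < x c.

Lemma choice_raise : C (vadd x (indv SA)) = shift x (indv SA) (indv SC).
Proof.
(* Each c in SC already loses a unit when a single a is offered, and (A3) forbids any
   further loss. *)
have le_x : lev x (vadd x (indv SA)) by move=> g; rewrite !ffunE; lia.
apply: lev_vsize_eq => [e|].
  have := disjoint_imply e SC_SA; rewrite !ffunE.
  case: (boolP (e \in SC)) => [eC /= eA | _ _].
    2: by have := choice_lev bx e; rewrite !ffunE; lia.
  have [a aA lt_a] := rejected eC.
  have le_a : lev (vadd x (unitv a)) (vadd x (indv SA)).
    by move=> g; rewrite !ffunE; case: (g =P a) => [->|_]; rewrite ?aA; lia.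
  by have := choice_min e bx le_a; rewrite !ffunE (negbTE eA); lia.
have le_SC : lev (indv SC) (vadd x (indv SA)).
  by move=> g; rewrite !ffunE; case: (boolP (g \in SC)) => /= [/SC_pos|_]; lia.
have := vsize_choice bx le_x; have := vsize_shift le_SC; rewrite Cx !vsize_indv; lia.
Qed.

Lemma raise_interesting e :
  e \notin SA -> interestingb (shift x (indv SA) (indv SC)) e -> interestingb x e.
Proof.
set X := shift x (indv SA) (indv SC); set Z := vadd x (indv SA).
move=> eA /andP [lt_u lt_C]; have CZ : C Z = X := choice_raise.
have le_XZ : lev X Z by move=> g; rewrite !ffunE; lia.
case: (boolP (e \in SC)) => eC.
  have le_XeZ : lev (vadd X (unitv e)) Z.
    move=> g; have := SC_pos eC; rewrite !ffunE.
    by case: (g =P e) => [->|_]; rewrite ?eA ?eC; lia.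
  have le_C : lev (C Z) (vadd X (unitv e)) by rewrite CZ => g; rewrite [X in _ <= X]ffunE; lia.
  by move: lt_C; rewrite (choice_sub bx le_XeZ le_C) CZ ltnn.
have Xe : X e = x e by rewrite !ffunE (negbTE eA) (negbTE eC) addn0 subn0.
(* Otherwise C (Z + 1^e) <= X, and (A1) gives C (X + 1^e) = C (Z + 1^e) = C Z = X. *)
rewrite /interestingb -Xe lt_u ltnNge /=; apply/negP => le_Ce.
set Ze := vadd Z (unitv e).
have bZe : bounded Ze.
  move=> g; have := bx g; rewrite !ffunE.
  by case: (g =P e) => [->|_]; rewrite ?(negbTE eA); lia.
have le_ZZe : lev Z Ze by move=> g; rewrite [X in _ <= X]ffunE; lia.
have le_CZe : lev (C Ze) X.
  move=> g; have [->|/negbTE ge] := eqVneq g e.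
    have le_xe : lev (vadd x (unitv e)) Ze by move=> h; rewrite !ffunE; lia.
    by rewrite Xe in le_Ce *; have := choice_min e bZe le_xe; rewrite !ffunE eqxx; lia.
  have := choice_min g bZe le_ZZe; have := choice_lev bZe g.
  by rewrite CZ !ffunE ge addn0; have := le_XZ g; rewrite !ffunE; lia.
have le_XeZe : lev (vadd X (unitv e)) Ze by move=> g; have := le_XZ g; rewrite !ffunE; lia.
have E1 := choice_sub bZe le_ZZe (fun g => leq_trans (le_CZe g) (le_XZ g)).
have le_CXe : lev (C Ze) (vadd X (unitv e)) by move=> g; have := le_CZe g; rewrite !ffunE; lia.
have E2 := choice_sub bZe le_XeZe le_CXe.
by move: lt_C; rewrite E2 -E1 CZ ltnn.
Qed.

End Raising.

Section Exchanging.
Variables (x : vec) (SA SC P : {set E}).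
Hypotheses (bx : bounded (vadd x (indv SA))) (Cx : C x = x).
Hypotheses (SA_P : SA \subset P) (SC_P : [disjoint SC & P]).
Hypotheses (SC_pos : forall c, c \in SC -> 0 < x c) (xP : uninteresting_on P x).
Hypothesis essential : forall a, a \in SA -> exists2 c, c \in SC &
  C (shift x (unitv a) (unitv c)) = shift x (unitv a) (unitv c) /\
  uninteresting_on (P :\ a) (shift x (unitv a) (unitv c)).

Lemma essential_uninteresting a : a \in SA -> exists2 c, c \in SC &
  C (shift x (unitv a) (unitv c)) = shift x (unitv a) (unitv c) /\
  uninteresting_on P (shift x (unitv a) (unitv c)).
Proof.
move=> aA; have [c cC [Cy yP]] := essential aA; exists c => //; split => // d dP.
have [->|da] := eqVneq d a; last by apply: yP; rewrite !inE da.
have ac : a != c by apply: contraTneq cC => <-; rewrite (disjointFl SC_P) // (subsetP SA_P).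
apply: (uninteresting_exchange (bounded_lev bx _) Cx ac (SC_pos cC) Cy) => [g||]; rewrite ?set11 //.
  by rewrite !ffunE; lia.
by move=> _ /set1P ->; apply: xP; apply: (subsetP SA_P).
Qed.

Lemma choice_vadd_uninteresting p :
  bounded (vadd x p) -> (forall e, 0 < p e -> e \in P) -> C (vadd x p) = x.
Proof.
move=> bxp pP; apply: choice_of_uninteresting bxp Cx _ _ xP => [g|g]; rewrite !ffunE.
  exact: leq_addr.
by move=> lt; apply: pP; lia.
Qed.

Lemma shift_choice_ge p g :
  lev (indv SA) p -> (forall e, 0 < p e -> e \in P) -> bounded (vadd x p) ->
  p g = (g \in SA) -> shift x p (indv SC) g <= C (shift x p (indv SC)) g.
Proof.
(* Apply (A2) to T and a vector above it whose choice is at least T at g: x + p, chosen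
   as x, when g is not in SA, and otherwise the essential exchange for g, which is the
   choice of x + p - 1^c. *)
set T := shift x p (indv SC) => le_p pP bxp pg.
have le_Tx : lev T (vadd x p) by move=> e; rewrite !ffunE; lia.
case: (boolP (g \in SA)) => gA; last first.
  have := choice_min g bxp le_Tx; rewrite choice_vadd_uninteresting // !ffunE pg (negbTE gA).
  lia.
have [c cC [Cy yP]] := essential_uninteresting gA.
set y := shift x (unitv g) (unitv c) in Cy yP *.
set Y := shift x p (unitv c).
have gC : g \notin SC by rewrite (disjointFl SC_P) // (subsetP SA_P).
have gc : (g == c) = false by apply: contraNF gC => /eqP ->.
have le_Y : lev Y (vadd x p) by move=> e; rewrite !ffunE; lia.
have le_yY : lev y Y by move=> e; have := le_p e; rewrite !ffunE; case: (e =P g) => [->|]; lia.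
have CY : C Y = y.
  apply: (choice_of_uninteresting (bounded_lev bxp le_Y) Cy le_yY _ yP) => e.
  by have := le_p e; rewrite !ffunE => _ lt; apply: pP; case: (e =P g) lt => [->|]; lia.
have le_TY : lev T Y.
  by move=> e; rewrite !ffunE; case: (e =P c) => [->|_]; rewrite ?cC; lia.
have := choice_min g (bounded_lev bxp le_Y) le_TY.
by rewrite CY !ffunE pg gA (negbTE gC) eqxx gc; lia.
Qed.

Lemma choice_exchange_id :
  C (shift x (indv SA) (indv SC)) = shift x (indv SA) (indv SC).
Proof.
have le_T : lev (shift x (indv SA) (indv SC)) (vadd x (indv SA)).
  by move=> e; rewrite !ffunE; lia.
apply: choice_id_of_ge (bounded_lev bx le_T) _ => g.
apply: shift_choice_ge => //; last by rewrite ffunE.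
by move=> e; rewrite ffunE; case: (boolP (e \in SA)) => // /(subsetP SA_P).
Qed.

Lemma exchange_uninteresting :
  #|SC| <= #|SA| -> uninteresting_on P (shift x (indv SA) (indv SC)).
Proof.
(* Otherwise T + 1^d would be acceptable, larger than x as #|SC| <= #|SA|, and below
   x + 1_SA + 1^d, whose choice is x: this contradicts (A3). *)
set T := shift x (indv SA) (indv SC) => card_SC d dP; apply/andP => -[lt_u lt_C].
set p := vadd (indv SA) (unitv d).
have dC : d \notin SC by rewrite (disjointFl SC_P).
have pP e : 0 < p e -> e \in P.
  by rewrite !ffunE; case: (e =P d) => [->|_]; case: (boolP (e \in SA)) => // /(subsetP SA_P).
have bxp : bounded (vadd x p).
  move=> e; have := bx e; rewrite !ffunE; case: (e =P d) => [->|_]; last lia.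
  by move: lt_u; rewrite !ffunE (negbTE dC); lia.
have Td : vadd T (unitv d) = shift x p (indv SC).
  apply/ffunP => e; rewrite !ffunE; case: (boolP (e \in SC)) => [/SC_pos|] /=; lia.
have le_Td : lev (vadd T (unitv d)) (vadd x p) by rewrite Td => e; rewrite !ffunE; lia.
have CTd : C (vadd T (unitv d)) = vadd T (unitv d).
  apply: choice_id_of_ge (bounded_lev bxp le_Td) _ => g.
  have [->|/negbTE gd] := eqVneq g d; first by move: lt_C; rewrite !ffunE eqxx; lia.
  rewrite Td; apply: shift_choice_ge => // [e|]; rewrite !ffunE ?gd; lia.
have := vsize_choice bxp le_Td; rewrite CTd choice_vadd_uninteresting //.
have le_SC : lev (indv SC) (vadd x (indv SA)).
  by move=> g; rewrite !ffunE; case: (boolP (g \in SC)) => /= [/SC_pos|_]; lia.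
by have := vsize_shift le_SC; rewrite vsize_vadd vsize_unitv !vsize_indv -/T; lia.
Qed.

End Exchanging.

End ChoiceFunction.

Lemma cycle_of_zip (T : eqType) (r : rel T) (s : seq T) :
  (forall pq, pq \in zip s (rot 1 s) -> r pq.1 pq.2) -> cycle r s.
Proof.
case: s => [//|y s]; rewrite rot1_cons /=.
elim: s {1 3}y => [|z s IH] y' rs /=; first by rewrite andbT; apply: (rs (y', y)); rewrite inE.
by rewrite (rs (y', z)) ?inE ?eqxx //= IH // => pq pq_s; apply: rs; rewrite inE pq_s orbT.
Qed.

Lemma card_le_next (T : finType) (s : seq (bool * T)) (b b' : bool) (A B : {set T}) :
  uniq s -> (forall a, a \in A -> exists2 c, c \in B & next s (b, a) = (b', c)) ->
  #|A| <= #|B|.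
Proof.
move=> us nextAB; pose g a := (next s (b, a)).2.
have g_inj : {in A &, injective g}.
  move=> a1 a2 /nextAB [c1 _ e1] /nextAB [c2 _ e2]; rewrite /g e1 e2 /= => c12.
  by move: e1; rewrite c12 -e2 => /(can_inj (prev_next us)) [].
rewrite -(card_in_imset g_inj); apply/subset_leq_card/subsetP => _ /imsetP [a aA ->].
by have [c cB] := nextAB a aA; rewrite /g => ->.
Qed.

Section Market.
Variables (W F E : finType) (G : gmarket W F E).
Local Notation vec := {ffun E -> nat}.
Local Notation C := (Defs.choice G).
Hypothesis choiceG : choice_axioms G.

Definition capv (v : W + F) (e : E) : nat := if incident G v e then cap G e else 0.

Lemma choice_on_vertex v : choice_on (capv v) (C v).
Proof.
have [A0 [A1 [A2 A3]]] := choiceG v.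
split=> [z /A0 [] // | z z' bz le | z z' bz le | z z' bz le].
- exact: A1 bz (bounded_lev bz le) le.
- exact: A2 bz (bounded_lev bz le) le.
- exact: A3 bz (bounded_lev bz le) le.
Qed.

Lemma interestingE v e z : bounded (capv v) z ->
  interesting G v e z <-> interestingb (capv v) (C v) z e.
Proof.
move=> bz; split=> [[_ [z' [bz' [lt [eq lt_C]]]]] | int].
  by apply/(interestingbP (choice_on_vertex v) e bz); exists z'.
split; first by case/andP: int; rewrite /capv; case: incident.
by case/(interestingbP (choice_on_vertex v) e bz): int => z' [bz' lt eq lt_C]; exists z'.
Qed.

Section StableMatching.
Variable x : vec.
Hypothesis xstable : stable G x.
Local Notation xv v := (restrict G v x).

Lemma restrict_acceptable v : acceptable G v (xv v).
Proof. by case: xstable => -[_ ]. Qed.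

Lemma Uplus_lt_cap e : Uplus G x e -> x e < cap G e.
Proof.
move/(interestingE _ (restrict_acceptable _).1) => /andP [+ _].
by rewrite /capv !ffunE /incident eqxx.
Qed.

Lemma legal_f_not_Uplus f a c : legal_f G x f a c -> ~ Uplus G x c.
Proof.
case=> /eqP fa [Ua [/eqP fc [ca rej]]]; subst f; rewrite /Uplus fc.
have [bx _] := restrict_acceptable (inr (fend G a)).
rewrite (interestingE _ bx); apply/negP.
apply: (rejected_uninteresting (choice_on_vertex _) _ _ rej); last by rewrite eq_sym.
move: Ua; rewrite /Uplus (interestingE _ bx) => /andP [lt _] g.
by have := bx g; move: lt; rewrite /capv !ffunE; case: eqP => [->|]; lia.
Qed.

Definition Uplus_at w := [set d | incident G (inl w) d & `[< Uplus G x d >]].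

Lemma uninteresting_Uplus_at w :
  uninteresting_on (capv (inl w)) (C (inl w)) (Uplus_at w) (xv (inl w)).
Proof.
move=> d; rewrite inE => /andP [/eqP wd /asboolP Ud]; apply/negP.
rewrite -(interestingE _ (restrict_acceptable _).1) -wd => Id.
by case: xstable => _ /(_ d); apply.
Qed.

Section Rotation.
Variable cyc : seq (bool * E).
Hypothesis xrot : rotation G x cyc.
Local Notation arc := (Defs.arc G x).

Lemma rotation_cycle : cycle (fun p q => `[< arc p q >]) cyc.
Proof. by case: xrot => _ [_ [arcs _]]; apply: cycle_of_zip => pq /arcs /asboolP. Qed.

Lemma arc_next p : p \in cyc -> arc p (next cyc p).
Proof. by move=> p_cyc; apply/asboolP; apply: next_cycle rotation_cycle p_cyc. Qed.

Lemma arc_prev p : p \in cyc -> arc (prev cyc p) p.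
Proof. by move=> p_cyc; apply/asboolP; apply: prev_cycle rotation_cycle p_cyc. Qed.

Lemma Uplus_or_Uminus p : p \in cyc -> Uplus G x p.2 \/ Uminus G x p.2.
Proof. by move=> p_cyc; case: (arc_next p_cyc). Qed.

Lemma next_w_Uplus e : (true, e) \in cyc -> Uplus G x e -> next cyc (true, e) = (false, e).
Proof.
move=> /arc_next; move: (next _ _) => [[] e'] [_ [_ /= arc_e]] Ue; last by case: arc_e => <-.
by case: arc_e => [[_ [[_ /(_ Ue)]]]].
Qed.

Lemma prev_w_Uminus e : (true, e) \in cyc -> Uminus G x e -> prev cyc (true, e) = (false, e).
Proof.
move=> /arc_prev; move: (prev _ _) => [[] e'] [_ [_ /= arc_e]] [_ nUe]; last by case: arc_e => ->.
by case: arc_e => [[_ [_ [_ [/nUe]]]]].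
Qed.

Lemma prev_f_Uplus e : (false, e) \in cyc -> Uplus G x e -> prev cyc (false, e) = (true, e).
Proof.
move=> /arc_prev; move: (prev _ _) => [[] e'] [_ [_ /= arc_e]] Ue; first by case: arc_e => ->.
by case: (legal_f_not_Uplus arc_e).
Qed.

Lemma next_f_Uminus e : (false, e) \in cyc -> Uminus G x e -> next cyc (false, e) = (true, e).
Proof.
move=> /arc_next; move: (next _ _) => [[] e'] [_ [_ /= arc_e]] [_ nUe]; first by case: arc_e => <-.
by case: arc_e => _ [/nUe].
Qed.

Lemma prev_w_Uplus a : (true, a) \in cyc -> Uplus G x a ->
  exists2 c, prev cyc (true, a) = (true, c) & essential G x (wend G c) c a.
Proof.
move=> /arc_prev; move: (prev _ _) => [[] c] [_ [_ /= arc_c]] Ua; first by exists c.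
by case: arc_c => -> [_ /(_ Ua)].
Qed.

Lemma prev_f_Uminus c : (false, c) \in cyc -> Uminus G x c ->
  exists2 a, prev cyc (false, c) = (false, a) & legal_f G x (fend G a) a c.
Proof.
move=> /arc_prev; move: (prev _ _) => [[] a] [_ [_ /= arc_a]] [_ nUc]; last by exists a.
by case: arc_a => -> /nUc.
Qed.

Lemma next_f_Uplus a : (false, a) \in cyc -> Uplus G x a ->
  exists2 c, next cyc (false, a) = (false, c) & legal_f G x (fend G a) a c.
Proof.
move=> /arc_next; move: (next _ _) => [[] c] [_ [_ /= arc_c]] Ua; last by exists c.
by case: arc_c => _ [_ /(_ Ua)].
Qed.

Lemma next_w_Uminus c : (true, c) \in cyc -> Uminus G x c ->
  exists2 a, next cyc (true, c) = (true, a) & essential G x (wend G c) c a.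
Proof.
move=> /arc_next; move: (next _ _) => [[] a] [_ [_ /= arc_a]] [_ nUc]; first by exists a.
by case: arc_a => _ /nUc.
Qed.

Lemma on_cycle_mem e : on_cycle cyc e -> (true, e) \in cyc /\ (false, e) \in cyc.
Proof.
have mem_w_f b : (b, e) \in cyc -> (~~ b, e) \in cyc.
  move=> e_cyc; case: (Uplus_or_Uminus e_cyc) => /= Ue; case: b e_cyc => /= e_cyc.
  - by rewrite -(next_w_Uplus e_cyc Ue) mem_next.
  - by rewrite -(prev_f_Uplus e_cyc Ue) mem_prev.
  - by rewrite -(prev_w_Uminus e_cyc Ue) mem_prev.
  - by rewrite -(next_f_Uminus e_cyc Ue) mem_next.
by case=> e_cyc; split=> //; exact: mem_w_f e_cyc.
Qed.

Definition raised := [set e | `[< on_cycle cyc e /\ Uplus G x e >]].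
Definition lowered := [set e | `[< on_cycle cyc e /\ Uminus G x e >]].
Definition raised_at v := [set e in raised | incident G v e].
Definition lowered_at v := [set e in lowered | incident G v e].
Definition rotated : vec := shift x (indv raised) (indv lowered).

Lemma in_raised e : reflect (on_cycle cyc e /\ Uplus G x e) (e \in raised).
Proof. by rewrite inE; apply: asboolP. Qed.

Lemma in_lowered e : reflect (on_cycle cyc e /\ Uminus G x e) (e \in lowered).
Proof. by rewrite inE; apply: asboolP. Qed.

Lemma lowered_raised_disjoint : [disjoint lowered & raised].
Proof. by apply/pred0P => e /=; apply/andP => -[/in_lowered [_ [_ nUe]] /in_raised [_ /nUe]]. Qed.

Lemma lowered_pos c : c \in lowered -> 0 < x c.
Proof. by case/in_lowered => _ []. Qed.

Lemma restrict_rotated v :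
  restrict G v rotated = shift (xv v) (indv (raised_at v)) (indv (lowered_at v)).
Proof. by apply/ffunP => e; rewrite !ffunE !inE; case: incident; rewrite ?andbT ?andbF. Qed.

Lemma bounded_raise v : bounded (capv v) (vadd (xv v) (indv (raised_at v))).
Proof.
move=> e; rewrite /capv !ffunE inE; case: incident; rewrite ?andbT ?andbF ?addn0 //.
case: (boolP (e \in raised)) => [/in_raised [_ /Uplus_lt_cap] | _]; first by rewrite addn1.
by case: xstable => -[le_cap _] _; rewrite addn0.
Qed.

Lemma lowered_raised_disjoint_at v : [disjoint lowered_at v & raised_at v].
Proof.
by apply: (disjointW _ _ lowered_raised_disjoint); apply/subsetP => e; rewrite inE => /andP [].
Qed.

Lemma lowered_at_pos v c : c \in lowered_at v -> 0 < xv v c.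
Proof. by rewrite inE ffunE => /andP [/lowered_pos pos ->]. Qed.

Lemma card_raised_at_f f : #|raised_at (inr f)| <= #|lowered_at (inr f)|.
Proof.
apply: (@card_le_next _ cyc false false) => [|a]; first by case: xrot => _ [].
rewrite inE => /andP [/in_raised [/on_cycle_mem [_ a_cyc] Ua] /eqP fa].
have [c nc legal] := next_f_Uplus a_cyc Ua; exists c => //.
have c_cyc : (false, c) \in cyc by rewrite -nc mem_next.
have [_ [_ [/eqP fc _]]] := legal; rewrite inE /incident fc fa eqxx andbT.
apply/in_lowered; split; first by right.
by case: (Uplus_or_Uminus c_cyc) => // /(legal_f_not_Uplus legal).
Qed.

Lemma lowered_rejected f c : c \in lowered_at (inr f) ->
  exists2 a, a \in raised_at (inr f) & C (inr f) (vadd (xv (inr f)) (unitv a)) c < xv (inr f) c.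
Proof.
rewrite inE => /andP [/in_lowered [/on_cycle_mem [_ c_cyc] Uc] /eqP fc].
have [a pc [_ [Ua [/eqP fca [ca rej]]]]] := prev_f_Uminus c_cyc Uc; exists a.
  rewrite inE /incident -fca fc eqxx andbT; apply/in_raised; split=> //.
  by right; rewrite -pc mem_prev.
by have := rej c; rewrite -fca fc eqxx (negbTE ca); lia.
Qed.

Lemma choice_raise_f f :
  C (inr f) (vadd (xv (inr f)) (indv (raised_at (inr f)))) = restrict G (inr f) rotated.
Proof.
rewrite restrict_rotated; apply: (choice_raise (choice_on_vertex _) (bounded_raise _)).
- exact: (restrict_acceptable _).2.
- exact: lowered_raised_disjoint_at.
- exact: lowered_at_pos.
- exact: card_raised_at_f.
- exact: lowered_rejected.
Qed.

Lemma card_lowered_at_w w : #|lowered_at (inl w)| <= #|raised_at (inl w)|.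
Proof.
apply: (@card_le_next _ cyc true true) => [|c]; first by case: xrot => _ [].
rewrite inE => /andP [/in_lowered [/on_cycle_mem [c_cyc _] Uc] /eqP wc].
have [a na [[_ [_ [/eqP wa [Ua _]]]] _]] := next_w_Uminus c_cyc Uc; exists a => //.
rewrite inE /incident wa wc eqxx andbT; apply/in_raised; split=> //.
by left; rewrite -na mem_next.
Qed.

Lemma raised_at_Uplus_at w : raised_at (inl w) \subset Uplus_at w.
Proof.
apply/subsetP => a; rewrite inE => /andP [/in_raised [_ Ua] wa].
by rewrite inE wa; apply/asboolP.
Qed.

Lemma lowered_at_Uplus_at w : [disjoint lowered_at (inl w) & Uplus_at w].
Proof.
apply/pred0P => c /=; rewrite [c \in lowered_at _]inE [c \in Uplus_at _]inE.
by apply/andP => -[/andP [/in_lowered [_ [_ nUc]] _] /andP [_ /asboolP]].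
Qed.

Lemma wshiftE w a c : wshift G x w a c = shift (xv (inl w)) (unitv a) (unitv c).
Proof. by apply/ffunP => e; rewrite !ffunE. Qed.

Lemma raised_essential w a : a \in raised_at (inl w) -> exists2 c, c \in lowered_at (inl w) &
  C (inl w) (shift (xv (inl w)) (unitv a) (unitv c)) = shift (xv (inl w)) (unitv a) (unitv c) /\
  uninteresting_on (capv (inl w)) (C (inl w)) (Uplus_at w :\ a)
    (shift (xv (inl w)) (unitv a) (unitv c)).
Proof.
rewrite inE => /andP [/in_raised [/on_cycle_mem [a_cyc _] Ua] /eqP wa].
have [c pa [[_ [Uc [/eqP wca [_ [b_y Cy]]]]] ess]] := prev_w_Uplus a_cyc Ua.
rewrite -wa wca; exists c.
  rewrite inE /incident eqxx andbT; apply/in_lowered; split=> //.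
  by left; rewrite -pa mem_prev.
rewrite -wshiftE; split=> // d.
rewrite !inE => /andP [da /andP [/eqP wd /asboolP Ud]]; apply/negP.
by rewrite -(interestingE _ b_y); apply: ess => //; exact/eqP.
Qed.

Lemma choice_rotated_w w : C (inl w) (restrict G (inl w) rotated) = restrict G (inl w) rotated.
Proof.
rewrite restrict_rotated; apply: (choice_exchange_id (choice_on_vertex _) (bounded_raise _)).
- exact: (restrict_acceptable _).2.
- exact: raised_at_Uplus_at.
- exact: lowered_at_Uplus_at.
- exact: lowered_at_pos.
- exact: uninteresting_Uplus_at.
- exact: raised_essential.
Qed.

Lemma rotated_uninteresting_w w :
  uninteresting_on (capv (inl w)) (C (inl w)) (Uplus_at w) (restrict G (inl w) rotated).
Proof.
rewrite restrict_rotated; apply: (exchange_uninteresting (choice_on_vertex _) (bounded_raise _)).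
- exact: (restrict_acceptable _).2.
- exact: raised_at_Uplus_at.
- exact: lowered_at_Uplus_at.
- exact: lowered_at_pos.
- exact: uninteresting_Uplus_at.
- exact: raised_essential.
- exact: card_lowered_at_w.
Qed.

Lemma restrict_rotated_lev v :
  lev (restrict G v rotated) (vadd (xv v) (indv (raised_at v))).
Proof. by move=> e; rewrite restrict_rotated !ffunE; lia. Qed.

Lemma rotated_bounded v : bounded (capv v) (restrict G v rotated).
Proof. exact: bounded_lev (bounded_raise v) (restrict_rotated_lev v). Qed.

Lemma choice_rotated_f f : C (inr f) (restrict G (inr f) rotated) = restrict G (inr f) rotated.
Proof.
apply: (choice_id_of_lev (choice_on_vertex _) (bounded_raise _) (restrict_rotated_lev _)).
exact: choice_raise_f.
Qed.

Lemma rotated_interesting_f f e : e \notin raised ->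
  interestingb (capv (inr f)) (C (inr f)) (restrict G (inr f) rotated) e ->
  interestingb (capv (inr f)) (C (inr f)) (xv (inr f)) e.
Proof.
move=> eR; rewrite restrict_rotated.
apply: (raise_interesting (choice_on_vertex _) (bounded_raise _)).
- exact: (restrict_acceptable _).2.
- exact: lowered_raised_disjoint_at.
- exact: lowered_at_pos.
- exact: card_raised_at_f.
- exact: lowered_rejected.
- by rewrite inE (negbTE eR).
Qed.

Lemma chi_rotation e :
  chi G x cyc e = (if e \in raised then 1 else if e \in lowered then -1 else 0)%R.
Proof. by rewrite /chi !inE. Qed.

Lemma rotated_chi e : Posz (rotated e) = (Posz (x e) + chi G x cyc e)%R.
Proof.
rewrite chi_rotation !ffunE.
have := disjoint_imply e lowered_raised_disjoint; have := @lowered_pos e.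
by case: (e \in raised); case: (e \in lowered) => /=; lia.
Qed.

Lemma rotated_gmatching : gmatching G rotated.
Proof.
split=> [e | [w|f]]; last 2 first.
- by split; [exact: rotated_bounded | exact: choice_rotated_w].
- by split; [exact: rotated_bounded | exact: choice_rotated_f].
have [[le_cap _] _] := xstable; have := le_cap e; rewrite !ffunE.
by case: (boolP (e \in raised)) => [/in_raised [_ /Uplus_lt_cap]|]; lia.
Qed.

Lemma rotated_unblocked e : ~ blocks G rotated e.
Proof.
rewrite /blocks !(interestingE _ (rotated_bounded _)) => -[int_w int_f].
have Ue : Uplus G x e.
  have [/in_raised [] // | eR] := boolP (e \in raised).
  by rewrite /Uplus (interestingE _ (restrict_acceptable _).1) (rotated_interesting_f eR).
have eU : e \in Uplus_at (wend G e) by rewrite inE /incident eqxx; apply/asboolP.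
by move: int_w; rewrite (negbTE (rotated_uninteresting_w eU)).
Qed.

Lemma rotated_precF : precF G x rotated.
Proof.
split=> [|f].
  have [[b e] p_cyc] : exists p, p \in cyc.
    by case: xrot; case: cyc => // p s; exists p; rewrite mem_head.
  have on_e : on_cycle cyc e by case: b p_cyc; [left | right].
  have eRL : (e \in raised) || (e \in lowered).
    case: (Uplus_or_Uminus p_cyc) => Ue; apply/orP.
      by left; apply/in_raised.
    by right; apply/in_lowered.
  move=> /(congr1 (fun z : vec => Posz (z e))); rewrite rotated_chi chi_rotation.
  have := disjoint_imply e lowered_raised_disjoint.
  by case: (e \in raised) (e \in lowered) eRL => -[]; lia.
have [eq_f|ne_f] := eqVneq (xv (inr f)) (restrict G (inr f) rotated); [by left | right].
have max_f : vmax (restrict G (inr f) rotated) (xv (inr f))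
              = vadd (xv (inr f)) (indv (raised_at (inr f))).
  apply/ffunP => e; rewrite restrict_rotated.
  have := disjoint_imply e (lowered_raised_disjoint_at (inr f)); have := @lowered_at_pos (inr f) e.
  by rewrite !ffunE; case: (e \in lowered_at _) => /=; lia.
split; first by split; [exact: rotated_bounded | exact: choice_rotated_f].
split; first exact: restrict_acceptable.
by split; [apply/eqP; rewrite eq_sym | rewrite max_f choice_raise_f].
Qed.

End Rotation.
End StableMatching.
End Market.

Theorem proposition3p4 (W F E : finType) (G : gmarket W F E) (x : {ffun E -> nat}) :
  simple_graph G -> choice_axioms G -> stable G x ->
  (exists xm, is_max_stable G xm /\ x <> xm) ->
  forall cyc : seq (bool * E), rotation G x cyc ->
  exists x' : {ffun E -> nat},
    (forall e, Posz (x' e) = (Posz (x e) + chi G x cyc e)%R) /\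
    stable G x' /\ precF G x x'.
Proof.
move=> _ choiceG xstable _ cyc xrot; exists (rotated G x cyc); split.
  exact: rotated_chi.
split; last exact: rotated_precF.
by split; [exact: rotated_gmatching | exact: rotated_unblocked].
Qed.
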